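(* Let $\alpha\in(0,1]$, $r\in\mathbb{R}$ and $\gamma\ge 1$. For every policy $\pi\in\Pi$, $\mathcal{U}^{r,\pi}_{\alpha,\gamma}\subseteq \mathcal{S}^{r,\pi}_\alpha$. Moreover, $\mathcal{U}^{r}_{\alpha,\gamma}\subseteq \mathcal{S}^{r}_\alpha$.
   Context: Setting: $S$, $A$, $W$ are Borel spaces (states, controls, disturbances), $T\in\mathbb{N}$. The sample space is $\Omega = (S\times A)^T\times S$ with its Borel $\sigma$-algebra $\mathcal{B}(\Omega)$; for $\omega=(x_0,u_0,\dots,x_{T-1},u_{T-1},x_T)$, $X_t(\omega)=x_t$ and $U_t(\omega)=u_t$. A Borel-measurable map $f:S\times A\times W\to S$ and a probability distribution $P_D$ on $W$ define the transition kernel $Q(B\mid x,u) = P_D(\{d\in W: f(x,u,d)\in B\})$ for $B\in\mathcal{B}(S)$. $\Pi$ is the set of randomized history-dependent policies $\pi=(\pi_0,\dots,\pi_{T-1})$, each $\pi_t$ a Borel-measurable stochastic kernel on $A$ given $H^t=(S\times A)^t\times S$. For $x\in S$, $\pi\in\Pi$, $P_x^\pi$ is the unique probability measure on $(\Omega,\mathcal{B}(\Omega))$ (Ionescu-Tulcea) under which $X_0=x$, $U_t$ is distributed according to $\pi_t(\cdot\mid X_0,U_0,\dots,X_t)$, and $X_{t+1}$ is distributed according to $Q(\cdot\mid X_t,U_t)$; $E_x^\pi$ denotes expectation under $P_x^\pi$. A constraint set $K\in\mathcal{B}(S)$ and a bounded Borel-measurable $g_K:S\to\mathbb{R}$ are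 given; $G := \max_{t=0,1,\dots,T} g_K(X_t)$. For a probability space $(\Omega,\mathcal{F},\mu)$, $Y\in L^1$ and $\alpha\in(0,1]$, $\mathrm{CVaR}_\alpha(Y) := \inf_{s\in\mathbb{R}}\big(s + \tfrac{1}{\alpha}E(\max(Y-s,0))\big)$. $\mathrm{CVaR}^\pi_{\alpha,x}$ denotes CVaR computed with respect to $P_x^\pi$. Risk-sensitive safe sets: $\mathcal{S}_\alpha^{r,\pi} := \{x\in S : \mathrm{CVaR}^\pi_{\alpha,x}(G)\le r\}$ and $\mathcal{S}_\alpha^{r} := \{x\in S : \inf_{\pi\in\Pi}\mathrm{CVaR}^\pi_{\alpha,x}(G)\le r\}$. Approximation sets: $\mathcal{U}^{r,\pi}_{\alpha,\gamma} := \{x\in S : \tfrac{1}{\alpha}E_x^\pi(\sum_{t=0}^T e^{\gamma g_K(X_t)})\le e^{\gamma r}\}$ and $\mathcal{U}^{r}_{\alpha,\gamma} := \{x\in S : \inf_{\pi\in\Pi}\tfrac{1}{\alpha}E_x^\pi(\sum_{t=0}^T e^{\gamma g_K(X_t)})\le e^{\gamma r}\}$. *)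

From HB Require Import structures.
From mathcomp Require Import all_boot all_order all_algebra.
From mathcomp Require Import all_classical all_reals all_analysis.
Set Implicit Arguments. Unset Strict Implicit. Unset Printing Implicit Defensive.
Import Order.TTheory GRing.Theory Num.Theory.
Local Open Scope classical_set_scope.
Local Open Scope ring_scope.

(* display of the history space H^t = (S x A)^t x S, built as nested products
   H^0 = S, H^(t+1) = (H^t x A) x S. *)
Fixpoint Hd (dS dA : measure_display) (t : nat) : measure_display :=
  match t with
  | 0 => dS
  | t'.+1 => measure_prod_display (measure_prod_display (Hd dS dA t', dA), dS)
  end.

Section history.
Context {dS dA : measure_display} (S : measurableType dS) (A : measurableType dA).

Fixpoint H (t : nat) : measurableType (Hd dS dA t) :=
  match t return measurableType (Hd dS dA t) with
  | 0 => S
  | t'.+1 => ((H t' * A) * S)%type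
  end.

(* projection of a history of length T onto its initial segment of length t
   (an arbitrary point is returned when t > T, which is never used). *)
Fixpoint hist (T : nat) : forall t : nat, H T -> H t :=
  match T return forall t, H T -> H t with
  | 0 => fun t w => match t return H t with 0 => w | _ => point end
  | T'.+1 => fun t w =>
      match eqVneq t T'.+1 with
      | EqNotNeq e => eq_rect T'.+1 H w t (esym e)
      | NeqNotEq _ => @hist T' t w.1.1
      end
  end.
Arguments hist T t w : clear implicits.

Definition Xc (T t : nat) (w : H T) : S :=
  match t return H t -> S with
  | 0 => fun h => h
  | t'.+1 => fun h => h.2
  end (hist T t w).

Definition Uc (T t : nat) (w : H T) : A := (hist T t.+1 w).1.2.

End history.
Arguments H {dS dA} S A t.
Arguments hist {dS dA S A} T t w.
Arguments Xc {dS dA S A} T t w.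
Arguments Uc {dS dA S A} T t w.

Definition Qker {dS dA dW : measure_display} {R : realType}
  {S : measurableType dS} {A : measurableType dA} {W : measurableType dW}
  (f : S * A * W -> S) (PD : probability W R) (B : set S) (x : S) (u : A)
  : \bar R := PD ((fun d => f (x, u, d)) @^-1` B).

(* the measure P is the Ionescu-Tulcea measure P_x^pi on Omega = H T *)
Definition strategic_measure {dS dA dW : measure_display} {R : realType}
  {S : measurableType dS} {A : measurableType dA} {W : measurableType dW}
  (T : nat) (f : S * A * W -> S) (PD : probability W R)
  (pi : forall t : 'I_T, R.-pker (H S A t) ~> A)
  (x : S) (P : probability (H S A T) R) : Prop :=
  [/\
      forall D : set S, measurable D ->
        P (Xc T 0 @^-1` D) = \d_x D,
      (* U_t is distributed according to pi_t(. | X_0, U_0, ..., X_t) *)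
      forall (t : 'I_T) (E : set (H S A t)) (C : set A),
        measurable E -> measurable C ->
        P [set w | hist T t w \in E /\ Uc T t w \in C] =
        (\int[P]_(w in [set w | hist T t w \in E]) pi t (hist T t w) C)%E &
      (* X_{t+1} is distributed according to Q(. | X_t, U_t) *)
      forall (t : 'I_T) (E : set (H S A t * A)) (D : set S),
        measurable E -> measurable D ->
        P [set w | (hist T t w, Uc T t w) \in E /\ Xc T t.+1 w \in D] =
        (\int[P]_(w in [set w | (hist T t w, Uc T t w) \in E])
            Qker f PD D (Xc T t w) (Uc T t w))%E].

Definition Gmax {dS dA : measure_display} {R : realType}
  {S : measurableType dS} {A : measurableType dA}
  (T : nat) (g : S -> R) (w : H S A T) : R :=
  \big[Num.max/g (Xc T 0 w)]_(t < T.+1) g (Xc T t w).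

Definition CVaR {d : measure_display} {R : realType} {Om : measurableType d}
  (P : probability Om R) (alpha : R) (Y : Om -> R) : \bar R :=
  ereal_inf [set (s%:E + (alpha^-1)%:E * \int[P]_w (Num.max (Y w - s) 0)%:E)%E
            | s in [set: R]].

Arguments Qker {dS dA dW R S A W} f PD B x u.
Arguments strategic_measure {dS dA dW R S A W} T f PD pi x P.
Arguments Gmax {dS dA R S A} T g w.
Arguments CVaR {d R Om} P alpha Y.

From HB Require Import structures.
From mathcomp Require Import all_boot all_order all_algebra.
From mathcomp Require Import all_classical all_reals all_analysis.
From mathcomp Require Import ring lra.
Import Order.TTheory GRing.Theory Num.Theory measurable_realfun.
Local Open Scope classical_set_scope.
Local Open Scope ring_scope.

(* The proof is a Chernoff-type estimate.  For gamma > 0 and any real z,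
   max(z, 0) <= exp(gamma z - 1) / gamma  (from 1 + x <= e^x).  Evaluating the
   CVaR infimum at the particular point s = r - 1/gamma and applying this with
   z = Y - s gives
     CVaR_alpha(Y) <= r - 1/gamma + e^{-gamma r}/(alpha gamma) E[e^{gamma Y}],
   so CVaR_alpha(Y) <= r as soon as (1/alpha) E[F] <= e^{gamma r} for some
   F >= e^{gamma Y}.  For Y = G = max_t g_K(X_t) we take
   F = sum_t e^{gamma g_K(X_t)}, which dominates e^{gamma G} because the
   maximum is attained at one of the summands.  This yields the inclusion for
   a fixed policy; the inclusion for the optimal sets follows by a general
   argument transferring such implications to infima over policies. *)

Section coordinates.
Context {dS dA : measure_display} (S : measurableType dS) (A : measurableType dA).

Lemma measurable_hist (T t : nat) : measurable_fun setT (@hist dS dA S A T t).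
Proof.
elim: T t => [|T IH] t /=.
  by case: t => [|t]; [exact: measurable_id | exact: measurable_cst].
case: eqVneq => [e|_]; first by subst t; exact: measurable_id.
apply: measurableT_comp; first exact: IH.
by apply: measurableT_comp; exact: measurable_fst.
Qed.

Lemma measurable_Xc (T t : nat) : measurable_fun setT (@Xc dS dA S A T t).
Proof.
rewrite /Xc; case: t => [|t] /=; first exact: (measurable_hist T 0).
by apply: measurableT_comp; [exact: measurable_snd | exact: measurable_hist].
Qed.

Lemma measurable_Gmax {R : realType} (T : nat) (g : S -> R) :
  measurable_fun [set: S] g -> measurable_fun setT (@Gmax dS dA R S A T g).
Proof.
move=> mg; rewrite /Gmax.
have mgX t : measurable_fun setT (fun w : H S A T => g (Xc T t w)).
  by apply: measurableT_comp => //; exact: measurable_Xc.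
elim: (index_enum _) => [|t s IH].
  by under eq_fun do rewrite big_nil; exact: mgX.
under eq_fun do rewrite big_cons.
exact: measurable_maxr.
Qed.

Lemma measurable_exp_cost {R : realType} (T : nat) (g : S -> R) (gamma : R) :
  measurable_fun [set: S] g ->
  measurable_fun setT
    (fun w : H S A T => \sum_(t < T.+1) expR (gamma * g (Xc T t w))).
Proof.
move=> mg; apply: measurable_sum => t.
apply: measurableT_comp; first exact: measurable_expR.
apply: measurable_funM; first exact: measurable_cst.
by apply: measurableT_comp => //; exact: measurable_Xc.
Qed.

End coordinates.

Section pointwise.
Context {R : realType}.

(* The positive part is dominated by a scaled exponential (tangent line of exp
   at 0, rescaled by gamma). *)
Lemma max0_le_expR (gamma z : R) :
  0 < gamma -> Num.max z 0 <= expR (gamma * z - 1) / gamma.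
Proof.
move=> g0; rewrite maxEle; case: ifP => _.
  by rewrite divr_ge0 // ?expR_ge0 // ltW.
rewrite ler_pdivlMr // mulrC.
by have := expR_ge1Dx (gamma * z - 1); rewrite addrC subrK.
Qed.

Lemma expR_bigmax_le_sum (n : nat) (F : 'I_n.+1 -> R) (gamma : R) :
  expR (gamma * \big[Num.max/F ord0]_(t < n.+1) F t)
  <= \sum_(t < n.+1) expR (gamma * F t).
Proof.
have term_le t : expR (gamma * F t) <= \sum_(i < n.+1) expR (gamma * F i).
  rewrite (bigD1 t) //= lerDl; apply: sumr_ge0 => i _; exact: expR_ge0.
apply: (big_ind (fun y => expR (gamma * y) <= _)) => //.
by move=> y1 y2 h1 h2; rewrite maxEle; case: ifP.
Qed.

Lemma excess_le_expR (gamma r y : R) : 0 < gamma ->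
  Num.max (y - (r - gamma^-1)) 0 <= expR (- (gamma * r)) / gamma * expR (gamma * y).
Proof.
move=> g0; apply: (le_trans (max0_le_expR _ _ g0)).
have -> : gamma * (y - (r - gamma^-1)) - 1 = gamma * y + - (gamma * r).
  by field; exact: lt0r_neq0.
rewrite expRD le_eqVlt; apply/orP; left; apply/eqP; ring.
Qed.

End pointwise.

Section cvar_bound.
Context {R : realType} {d : measure_display} {Om : measurableType d}.
Variable P : probability Om R.

Lemma CVaR_le_objective (alpha s : R) (Y : Om -> R) :
  (CVaR P alpha Y <= s%:E + (alpha^-1)%:E * \int[P]_w (Num.max (Y w - s) 0)%:E)%E.
Proof. by apply: ereal_inf_lbound; exists s. Qed.

Lemma CVaR_le_of_expR_bound (alpha gamma r : R) (Y F : Om -> R) :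
  0 < alpha -> 0 < gamma ->
  measurable_fun setT Y -> measurable_fun setT F ->
  (forall w, expR (gamma * Y w) <= F w) ->
  ((alpha^-1)%:E * \int[P]_w (F w)%:E <= (expR (gamma * r))%:E)%E ->
  (CVaR P alpha Y <= r%:E)%E.
Proof.
move=> a0 g0 mY mF YF hF.
set s := r - gamma^-1; set k := expR (- (gamma * r)) / gamma.
have k0 : 0 <= k by rewrite divr_ge0 // ?expR_ge0 // ltW.
have F0 w : 0 <= F w by apply: le_trans (YF w); exact: expR_ge0.
have excess_le : (\int[P]_w (Num.max (Y w - s) 0)%:E
                  <= k%:E * \int[P]_w (F w)%:E)%E.
  apply: (@le_trans _ _ (\int[P]_w (k * F w)%:E)%E); last first.
    under eq_integral do rewrite EFinM.
    rewrite ge0_integralZl_EFin //; first by move=> w _; rewrite lee_fin.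
    exact/measurable_EFinP.
  apply: ge0_le_integral => //.
  - by move=> w _; rewrite lee_fin le_max lexx orbT.
  - apply/measurable_EFinP; apply: measurable_maxr => //.
    by apply: measurable_funB => //; exact: measurable_cst.
  - by apply/measurable_EFinP; apply: measurable_funM => //; exact: measurable_cst.
  - move=> w _; rewrite lee_fin; apply: (le_trans (excess_le_expR _ _ _ g0)).
    by rewrite ler_wpM2l.
have EF0 : (0 <= \int[P]_w (F w)%:E)%E by apply: integral_ge0 => w _; rewrite lee_fin.
apply: (le_trans (CVaR_le_objective alpha s Y)).
(* E[F] is finite, being bounded by alpha exp(gamma r). *)
move: EF0 hF excess_le; case: (\int[P]_w (F w)%:E)%E => [i| |] //=; last first.
  by rewrite mulry gtr0_sg ?invr_gt0 // mul1e leye_eq.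
rewrite -EFinM lee_fin => _ hF excess_le.
apply: (@le_trans _ _ (s%:E + (alpha^-1)%:E * (k * i)%:E)%E).
  by apply: leeD2l; apply: lee_wpmul2l => //; rewrite lee_fin invr_ge0 ltW.
rewrite -EFinM -EFinD lee_fin.
suff : alpha^-1 * (k * i) <= gamma^-1 by rewrite /s; lra.
have -> : alpha^-1 * (k * i) = alpha^-1 * i * k by ring.
apply: (le_trans (ler_wpM2r k0 hF)).
by rewrite /k mulrA expRxMexpNx_1 mul1r.
Qed.

End cvar_bound.

(* If, for every index pi and threshold r, u(pi) <= exp(gamma r) implies
   c(pi) <= r, then the same implication holds between the infima of u and c
   (for gamma > 0, so that thresholds can be pushed up by any e > 0). *)
Lemma ereal_inf_le_transfer {R : realType} {I : Type} (u c : I -> \bar R)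
    (gamma r : R) : 0 < gamma ->
  (forall pi r', (u pi <= (expR (gamma * r'))%:E)%E -> (c pi <= r'%:E)%E) ->
  (ereal_inf (u @` setT) <= (expR (gamma * r))%:E)%E ->
  (ereal_inf (c @` setT) <= r%:E)%E.
Proof.
move=> g0 uc hinf; apply/lee_addgt0Pr => e e0.
have : (ereal_inf (u @` setT) < (expR (gamma * (r + e)))%:E)%E.
  by apply: (le_lt_trans hinf); rewrite lte_fin ltr_expR ltr_pM2l // ltrDl.
case/ereal_inf_lt => _ [pi _ <-] /ltW/uc cpi.
by apply: le_trans cpi; apply: ereal_inf_lbound; exists pi.
Qed.

Theorem theorem2
  (R : realType) (dS dA dW : measure_display)
  (S : measurableType dS) (A : measurableType dA) (W : measurableType dW)
  (T : nat)
  (f : S * A * W -> S) (f_meas : measurable_fun [set: S * A * W] f)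
  (PD : probability W R)
  (P : S -> (forall t : 'I_T, R.-pker (H S A t) ~> A) -> probability (H S A T) R)
  (HP : forall x pi, strategic_measure T f PD pi x (P x pi))
  (K : set S) (K_meas : measurable K)
  (gK : S -> R) (gK_meas : measurable_fun [set: S] gK)
  (gK_bdd : exists M : R, forall y : S, `|gK y| <= M)
  (alpha r gamma : R)
  (halpha : 0 < alpha <= 1) (hgamma : 1 <= gamma) :
  (forall pi : (forall t : 'I_T, R.-pker (H S A t) ~> A),
     [set x | ((alpha^-1)%:E *
               \int[P x pi]_w (\sum_(t < T.+1) expR (gamma * gK (Xc T t w)))%:E
               <= (expR (gamma * r))%:E)%E]
     `<=` [set x | (CVaR (P x pi) alpha (Gmax T gK) <= r%:E)%E])
  /\
  [set x | (ereal_inf [set ((alpha^-1)%:E *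
               \int[P x pi]_w (\sum_(t < T.+1) expR (gamma * gK (Xc T t w)))%:E)%E
             | pi in [set: forall t : 'I_T, R.-pker (H S A t) ~> A]]
           <= (expR (gamma * r))%:E)%E]
  `<=` [set x | (ereal_inf [set CVaR (P x pi) alpha (Gmax T gK)
             | pi in [set: forall t : 'I_T, R.-pker (H S A t) ~> A]]
           <= r%:E)%E].
Proof.
have a0 : 0 < alpha by case/andP: halpha.
have g0 : 0 < gamma by apply: lt_le_trans hgamma.
have policy_safe x pi r' :
    ((alpha^-1)%:E *
       \int[P x pi]_w (\sum_(t < T.+1) expR (gamma * gK (Xc T t w)))%:E
     <= (expR (gamma * r'))%:E)%E ->
    (CVaR (P x pi) alpha (Gmax T gK) <= r'%:E)%E.
  apply: CVaR_le_of_expR_bound => //.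
  - exact: measurable_Gmax.
  - exact: measurable_exp_cost.
  - by move=> w; exact: expR_bigmax_le_sum.
split; first by move=> pi x; exact: policy_safe.
by move=> x; apply: ereal_inf_le_transfer g0 _; exact: policy_safe.
Qed.
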